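(* In the Setting, suppose that $r=\sqrt{K-\lambda_1}$ and $s=-\sqrt{K-\lambda_1}$. Then \[ m=\frac{(-s)(n-1)}{n+s},\quad V=\frac{n(-s)(n-1)}{n+s},\quad K=(-s)(n-1),\quad \lambda_1=(-s)(n+s-1),\quad \lambda_2=\frac{(-s)(n-1)(n+s)}{n}. \]
   Context: Setting: $\Gamma$ is a primitive strongly regular graph with parameters $(v,k,\lambda,\mu)$ (a $k$-regular graph on $v$ vertices, any two adjacent vertices having $\lambda$ and any two distinct non-adjacent vertices having $\mu$ common neighbours; primitive means $\Gamma$ and its complement are connected), with spectrum $k^1, r^f, s^g$ where $k>r>s$ and exponents are multiplicities. $C$ is a coclique in $\Gamma$ of size $c=\frac{vs}{s-k}$. A $K$-regular graph on $V$ vertices, neither complete nor edgeless, is a divisible design graph with parameters $(V,K,\lambda_1,\lambda_2;m,n)$ if its vertex set can be partitioned into $m$ canonical classes of size $n$ such that two distinct vertices in the same class have exactly $\lambda_1$ common neighbours and two vertices in different classes have exactly $\lambda_2$ common neighbours; it is proper unless $m=1$, $n=1$ or $\lambda_1=\lambda_2$. It is assumed that the subgraph $\Delta$ induced on $V(\Gamma)\setminus C$ is a proper divisible design graph with parameters $(V,K,\lambda_1,\lambda_2;m,n)$. *)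

From mathcomp Require Import all_boot all_order all_algebra.
Set Implicit Arguments. Unset Strict Implicit. Unset Printing Implicit Defensive.
Import Order.TTheory GRing.Theory Num.Theory.
Local Open Scope ring_scope.

Definition simple_graph (T : finType) (e : rel T) : Prop :=
  (forall x y, e x y = e y x) /\ (forall x, ~~ e x x).

Definition nbhd_in (T : finType) (e : rel T) (D : {set T}) (x : T) : {set T} :=
  [set y in D | e x y].

Definition compl_rel (T : finType) (e : rel T) : rel T :=
  [rel x y | (x != y) && ~~ e x y].

Definition connected_graph (T : finType) (e : rel T) : Prop :=
  forall x y : T, connect e x y.

Definition srg (T : finType) (e : rel T) (v k lam mu : nat) : Prop :=
  [/\ simple_graph e, #|T| = v,
      (forall x, #|nbhd_in e setT x| = k),
      (forall x y, x != y -> e x y ->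
         #|nbhd_in e setT x :&: nbhd_in e setT y| = lam) &
      (forall x y, x != y -> ~~ e x y ->
         #|nbhd_in e setT x :&: nbhd_in e setT y| = mu)].

Definition primitive (T : finType) (e : rel T) : Prop :=
  connected_graph e /\ connected_graph (compl_rel e).

Definition adjmx (R : nzRingType) (T : finType) (e : rel T) : 'M[R]_#|T| :=
  \matrix_(i, j) ((e (enum_val i) (enum_val j) : nat)%:R).

Definition srg_spectrum (R : fieldType) (T : finType) (e : rel T)
    (k r s : R) : Prop :=
  forall a : R, eigenvalue (adjmx R e) a <-> (a = k \/ a = r \/ a = s).

Definition coclique (T : finType) (e : rel T) (C : {set T}) : Prop :=
  forall x y, x \in C -> y \in C -> ~~ e x y.

Definition ddg_on (T : finType) (e : rel T) (D : {set T})
    (V K l1 l2 m n : nat) : Prop :=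
  [/\ #|D| = V,
      (forall x, x \in D -> #|nbhd_in e D x| = K),
      (exists x y, [/\ x \in D, y \in D, x != y & ~~ e x y]),
      (exists x y, [/\ x \in D, y \in D & e x y]) &
      exists P : {set {set T}},
        [/\ partition P D, #|P| = m,
            (forall B, B \in P -> #|B| = n),
            (forall x y, x \in D -> y \in D -> x != y ->
               pblock P x = pblock P y ->
               #|nbhd_in e D x :&: nbhd_in e D y| = l1) &
            (forall x y, x \in D -> y \in D ->
               pblock P x != pblock P y ->
               #|nbhd_in e D x :&: nbhd_in e D y| = l2)]].

Definition proper_ddg_on (T : finType) (e : rel T) (D : {set T})
    (V K l1 l2 m n : nat) : Prop :=
  [/\ ddg_on e D V K l1 l2 m n, m != 1%N, n != 1%N & l1 != l2].

From mathcomp Require Import all_boot all_order all_algebra.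
From mathcomp Require Import ring lra.
Set Implicit Arguments. Unset Strict Implicit. Unset Printing Implicit Defensive.
Import Order.TTheory GRing.Theory Num.Theory.
Local Open Scope ring_scope.

(* Let C be a Hoffman coclique of the strongly regular graph, c = |C|, and
   let D be its complement, inducing a divisible design graph with m classes
   of size n.  Write t = sqrt (K - l1), so the eigenvalues are k, t, -t.

   1. Spectrum: t and -t are both roots of x^2 - (lam - mu) x - (k - mu),
      hence lam = mu and mu = k - t^2.
   2. Counting: let N be the C x D adjacency matrix.  Its row sums (k), its
      column sums (k - K), the entries of N N^T (k, mu) and of N^T N
      (k - K, mu - l1, mu - l2) are known; counting the entries of N, of
      N N^T and of N^T N, and the traces of (N N^T)^2 = (N^T N)^2, gives four
      polynomial identities in c, m, n, k, K, mu, l1, l2.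
   3. Algebra: these identities say that c - 1 and m - 1 weight two numbers
      with equal first and second moments, which forces c = m; together with
      the Hoffman equality c (k + t) = v t this determines m, V = m n, K, l1
      and l2 in terms of n and t. *)

Lemma sqr_sum (R : comNzRingType) (I : finType) (X : {set I}) (g : I -> R) :
  (\sum_(i in X) g i) ^+ 2 = \sum_(i in X) \sum_(i' in X) g i * g i'.
Proof. by rewrite expr2 mulr_suml; apply: eq_bigr => i _; rewrite mulr_sumr. Qed.

Section GramSums.
Variables (R : comNzRingType) (I J : finType) (A : {set I}) (B : {set J}).
Variable f : I -> J -> R.

(* trace ((f f^T)^2) = trace ((f^T f)^2). *)
Lemma gram_trace_sqr :
  \sum_(i in A) \sum_(i' in A) (\sum_(j in B) f i j * f i' j) ^+ 2 =
  \sum_(j in B) \sum_(j' in B) (\sum_(i in A) f i j * f i j') ^+ 2.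
Proof.
under eq_bigr => i _ do under eq_bigr => i' _ do rewrite sqr_sum.
under [RHS]eq_bigr => j _ do under eq_bigr => j' _ do rewrite sqr_sum.
under eq_bigr => i _ do rewrite exchange_big.
under eq_bigr => i _ do under eq_bigr => j _ do rewrite exchange_big.
rewrite exchange_big; under eq_bigr => j _ do rewrite exchange_big.
by do 4!apply: eq_bigr => ? _; ring.
Qed.

Lemma gram_total :
  \sum_(i in A) \sum_(i' in A) \sum_(j in B) f i j * f i' j =
  \sum_(j in B) (\sum_(i in A) f i j) ^+ 2.
Proof.
under [RHS]eq_bigr => j _ do rewrite sqr_sum.
by rewrite [RHS]exchange_big; apply: eq_bigr => i _; rewrite [RHS]exchange_big.
Qed.

End GramSums.

Section Counting.
Variables (R : nzRingType) (T : finType) (e : rel T).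

Lemma card_set_sum (A : {set T}) (p : pred T) :
  (#|[set x in A | p x]|%:R : R) = \sum_(x in A) (p x)%:R.
Proof.
rewrite -sum1_card natr_sum (eq_bigl (fun x => (x \in A) && p x)) => [|x]; last first.
  by rewrite inE.
by rewrite big_mkcondr; apply: eq_bigr => x _; case: (p x).
Qed.

Lemma card_common_nbhd (A : {set T}) (x y : T) :
  (#|nbhd_in e A x :&: nbhd_in e A y|%:R : R) = \sum_(z in A) (e x z && e y z)%:R.
Proof.
rewrite -card_set_sum; congr (_%:R); apply: eq_card => z.
by rewrite !inE andbACA andbb.
Qed.

Lemma card_nbhd (A : {set T}) (x : T) :
  (#|nbhd_in e A x|%:R : R) = \sum_(z in A) (e x z)%:R.
Proof.
by rewrite -[nbhd_in e A x]setIid card_common_nbhd; apply: eq_bigr => z _; rewrite andbb.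
Qed.

Lemma natr_andb (a b : bool) : (a%:R * b%:R : R) = (a && b)%:R.
Proof. by case: a; case: b; rewrite /= ?mul1r ?mul0r. Qed.

Lemma sum_over_vertices (F : T -> R) :
  \sum_(i < #|T|) F (enum_val i) = \sum_(z in [set: T]) F z.
Proof. by rewrite -big_enum_val; apply: eq_bigl => z; rewrite !inE. Qed.

Lemma sum_setT_split (C : {set T}) (F : T -> R) :
  \sum_(x in [set: T]) F x = \sum_(x in C) F x + \sum_(x in ~: C) F x.
Proof. by rewrite (big_setID C) setTI setTD. Qed.

End Counting.

Section SrgSpectrum.
Variables (R : fieldType) (T : finType) (e : rel T) (v k lam mu : nat).
Hypothesis srgE : srg e v k lam mu.
Let A := adjmx R e.

Lemma adjmx_sqr :
  A *m A = k%:R%:M + lam%:R *: A + mu%:R *: (const_mx 1 - 1%:M - A).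
Proof.
case: srgE => [[esym eirr]] _ regk adjl nadjm.
apply/matrixP => i j; rewrite !mxE.
have -> : \sum_(l < #|T|) A i l * A l j =
    #|nbhd_in e setT (enum_val i) :&: nbhd_in e setT (enum_val j)|%:R.
  rewrite card_common_nbhd -sum_over_vertices; apply: eq_bigr => l _.
  by rewrite !mxE (esym (enum_val l)) natr_andb.
have [<-|neq] := eqVneq i j; first by rewrite setIid regk (negbTE (eirr _)) /=; ring.
have nxy : enum_val i != enum_val j by apply: contra neq => /eqP /enum_val_inj ->.
case exy: (e (enum_val i) (enum_val j)).
  by rewrite adjl //=; ring.
by rewrite nadjm ?exy //=; ring.
Qed.

Lemma adjmx_const1 : A *m (const_mx 1 : 'M_#|T|) = k%:R *: const_mx 1.
Proof.
case: srgE => _ _ regk _ _.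
apply/matrixP => i j; rewrite !mxE mulr1 -(regk (enum_val i)) card_nbhd.
by rewrite -sum_over_vertices; apply: eq_bigr => l _; rewrite !mxE mulr1.
Qed.

Lemma srg_eigenvalue_root (a : R) :
  eigenvalue A a -> a != k%:R ->
  a ^+ 2 - (lam%:R - mu%:R) * a - (k%:R - mu%:R) = 0.
Proof.
move=> /eigenvalueP [u hu un0] ak.
have uJ0 : u *m (const_mx 1 : 'M_#|T|) = 0.
  have : a *: (u *m const_mx 1) = k%:R *: (u *m (const_mx 1 : 'M_#|T|)).
    by rewrite scalemxAl -hu -mulmxA adjmx_const1 scalemxAr.
  by move/eqP; rewrite -subr_eq0 -scalerBl scaler_eq0 subr_eq0 (negbTE ak) => /eqP.
have := congr1 (mulmx^~ A) hu.
rewrite -mulmxA adjmx_sqr -scalemxAl hu !mulmxDr -!scalemxAr !mulmxBr.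
rewrite mul_mx_scalar hu uJ0 mulmx1 => /eqP; rewrite -subr_eq0.
have -> : k%:R *: u + lam%:R *: (a *: u) + mu%:R *: (0 - u - a *: u) - a *: (a *: u)
   = - ((a ^+ 2 - (lam%:R - mu%:R) * a - (k%:R - mu%:R)) *: u).
  by apply/rowP => j; rewrite !mxE; ring.
by rewrite oppr_eq0 scaler_eq0 (negbTE un0) orbF => /eqP.
Qed.

End SrgSpectrum.

Lemma srg_symmetric_spectrum (R : realFieldType) (T : finType) (e : rel T)
    (v k lam mu : nat) (t : R) :
  srg e v k lam mu -> srg_spectrum e k%:R t (- t) -> 0 < t -> t < k%:R ->
  lam = mu /\ (mu%:R : R) = k%:R - t ^+ 2.
Proof.
move=> srgE spec t_gt0 t_lt_k.
have rt : t ^+ 2 - (lam%:R - mu%:R) * t - (k%:R - mu%:R) = 0.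
  by apply: (srg_eigenvalue_root srgE); [apply/spec; right; left | rewrite lt_eqF].
have rs : (- t) ^+ 2 - (lam%:R - mu%:R) * - t - (k%:R - mu%:R) = 0.
  apply: (srg_eigenvalue_root srgE); first by apply/spec; right; right.
  by rewrite lt_eqF // (lt_trans _ t_lt_k) // gtrN.
have /eqP : (lam%:R - mu%:R : R) * (t + t) = 0.
  have -> : (lam%:R - mu%:R : R) * (t + t) =
      ((- t) ^+ 2 - (lam%:R - mu%:R) * - t - (k%:R - mu%:R))
      - (t ^+ 2 - (lam%:R - mu%:R) * t - (k%:R - mu%:R)) by ring.
  by rewrite rt rs subrr.
rewrite mulf_eq0 (gt_eqF (addr_gt0 t_gt0 t_gt0)) orbF subr_eq0 eqr_nat => /eqP lm.
by split=> //; rewrite -[RHS]addr0 -rt lm; ring.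
Qed.

Lemma sum_kronecker (R : nzRingType) (T : finType) (X : {set T}) (a b : R) z :
  z \in X -> \sum_(z' in X) (if z == z' then a else b) = a + (#|X|%:R - 1) * b.
Proof.
move=> zX; rewrite (big_setD1 z zX) eqxx (eq_bigr (fun _ => b)); last first.
  by move=> z'; rewrite !inE => /andP [nz _]; rewrite eq_sym (negbTE nz).
by rewrite sumr_const (cardsD1 z X) zX add1n mulrSr addrK mulr_natl.
Qed.

Lemma sum_by_blocks (R : nzRingType) (T : finType) (X : {set T})
    (P : {set {set T}}) (n : nat) (a b c : R) x :
  partition P X -> (forall B, B \in P -> #|B| = n) -> x \in X ->
  \sum_(y in X) (if x == y then a else if pblock P x == pblock P y then b else c)
  = a + (n%:R - 1) * b + (#|X|%:R - n%:R) * c.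
Proof.
move=> /and3P [/eqP cov triv _] sizeP xX.
have xP : x \in cover P by rewrite cov.
have Bx := pblock_mem xP.
have xBx : x \in pblock P x by rewrite mem_pblock.
have BxX : pblock P x \subset X by rewrite -cov; apply: bigcup_sup Bx.
have out : \sum_(y in X :\: pblock P x)
    (if x == y then a else if pblock P x == pblock P y then b else c)
    = \sum_(y in X :\: pblock P x) c.
  apply: eq_bigr => y; rewrite !inE => /andP [yBx _].
  have xy : x != y by apply: contraNneq yBx => <-.
  by rewrite (negbTE xy) (eq_pblock _ triv xP) (negbTE yBx).
have inside : \sum_(y in pblock P x :\ x)
    (if x == y then a else if pblock P x == pblock P y then b else c)
    = \sum_(y in pblock P x :\ x) b.
  apply: eq_bigr => y; rewrite !inE => /andP [nyx yB].
  by rewrite eq_sym (negbTE nyx) (eq_pblock _ triv xP) yB.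
rewrite (big_setID (pblock P x)) /= out (setIidPr BxX).
rewrite (big_setD1 x xBx) eqxx /= inside !sumr_const; congr (_ + _ + _).
  by rewrite -(sizeP _ Bx) (cardsD1 x (pblock P x)) xBx add1n mulrSr addrK mulr_natl.
rewrite cardsD (setIidPr BxX) (sizeP _ Bx) -natrB ?mulr_natl //.
by rewrite -(sizeP _ Bx) subset_leq_card.
Qed.

Section CocliqueIncidence.
Variables (R : comNzRingType) (T : finType) (e : rel T) (v k mu : nat).
Variables (C : {set T}) (K l1 l2 n : nat) (P : {set {set T}}).
Local Notation D := (~: C).
Hypothesis srgE : srg e v k mu mu.
Hypothesis cocC : coclique e C.
Hypothesis regD : forall x, x \in D -> #|nbhd_in e D x| = K.
Hypothesis partD : partition P D.
Hypothesis sizeP : forall B, B \in P -> #|B| = n.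
Hypothesis sameB : forall x y, x \in D -> y \in D -> x != y ->
  pblock P x = pblock P y -> #|nbhd_in e D x :&: nbhd_in e D y| = l1.
Hypothesis diffB : forall x y, x \in D -> y \in D ->
  pblock P x != pblock P y -> #|nbhd_in e D x :&: nbhd_in e D y| = l2.

(* N is the C x D incidence matrix of the graph. *)
Let N (z x : T) : R := (e z x)%:R.

(* Since C is a coclique, a function supported on the neighbourhood of a
   vertex of C has the same sum over all vertices as over D. *)
Lemma sum_nbhd_of_C (G : T -> R) z : z \in C ->
  (forall x, ~~ e z x -> G x = 0) ->
  \sum_(x in [set: T]) G x = \sum_(x in D) G x.
Proof.
move=> zC G0; rewrite (sum_setT_split C) big1 ?add0r // => x xC.
exact/G0/cocC.
Qed.

(* A vertex of C has all its k neighbours in D. *)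
Lemma row_sum_N z : z \in C -> \sum_(x in D) N z x = k%:R.
Proof.
case: srgE => _ _ regk _ _ zC; rewrite -(regk z) card_nbhd.
by rewrite (sum_nbhd_of_C zC) // => x /negbTE ->.
Qed.

(* N N^T: two distinct vertices of C are non-adjacent, so share mu neighbours. *)
Lemma row_gram_N z z' : z \in C -> z' \in C ->
  \sum_(x in D) N z x * N z' x = if z == z' then k%:R else mu%:R.
Proof.
case: srgE => _ _ _ _ nadjm zC z'C; under eq_bigr => x _ do rewrite natr_andb.
case: eqVneq => [<-|zz']; first by rewrite -(row_sum_N zC); apply: eq_bigr => x _; rewrite andbb.
rewrite -(nadjm z z' zz' (cocC zC z'C)) card_common_nbhd.
by rewrite (sum_nbhd_of_C zC) // => x /negbTE ->.
Qed.

Lemma col_sum_N x : x \in D -> \sum_(z in C) N z x = k%:R - K%:R.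
Proof.
case: srgE => [[esym _]] _ regk _ _ xD.
rewrite -(regk x) -(regD xD) !card_nbhd (sum_setT_split C) addrK.
by apply: eq_bigr => z _; rewrite /N esym.
Qed.

(* N^T N: mu common neighbours in T (lam = mu), of which l1 resp. l2 lie in D. *)
Lemma col_gram_N x y : x \in D -> y \in D ->
  \sum_(z in C) N z x * N z y =
  if x == y then k%:R - K%:R
  else if pblock P x == pblock P y then mu%:R - l1%:R else mu%:R - l2%:R.
Proof.
case: srgE => [[esym _]] _ _ adjm nadjm xD yD.
under eq_bigr => z _ do rewrite natr_andb !(esym z).
case: eqVneq => [<-|xy].
  by rewrite -(col_sum_N xD); apply: eq_bigr => z _; rewrite andbb /N esym.
have common_mu : (mu%:R : R) = \sum_(z in [set: T]) (e x z && e y z)%:R.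
  by rewrite -card_common_nbhd; case exy: (e x y); [rewrite adjm | rewrite nadjm ?exy].
rewrite common_mu (sum_setT_split C).
case: eqVneq => Bxy; [rewrite -(sameB xD yD xy Bxy) | rewrite -(diffB xD yD Bxy)];
  by rewrite card_common_nbhd addrK.
Qed.

Local Notation c := (#|C|%:R : R).
Local Notation V := (#|D|%:R : R).

Lemma sum_const_card (X : {set T}) (a : R) : \sum_(x in X) a = #|X|%:R * a.
Proof. by rewrite sumr_const mulr_natl. Qed.

(* Each of the following identities counts a configuration in two ways:
   the entries of N, the entries of N N^T, the entries of N^T N, and the
   trace of (N N^T)^2 = trace of (N^T N)^2. *)

Lemma count_edges_C_D : c * k%:R = V * (k%:R - K%:R).
Proof.
rewrite -!sum_const_card -(eq_bigr _ row_sum_N) -(eq_bigr _ col_sum_N).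
exact: exchange_big.
Qed.

Lemma count_paths_through_D :
  c * (k%:R + (c - 1) * mu%:R) = V * (k%:R - K%:R) ^+ 2.
Proof.
rewrite -!sum_const_card.
under [RHS]eq_bigr => x xD do rewrite -(col_sum_N xD).
rewrite -gram_total; apply: eq_bigr => z zC.
by under eq_bigr => z' z'C do rewrite row_gram_N //; rewrite sum_kronecker.
Qed.

Lemma count_paths_through_C :
  V * ((k%:R - K%:R) + (n%:R - 1) * (mu%:R - l1%:R) + (V - n%:R) * (mu%:R - l2%:R))
  = c * k%:R ^+ 2.
Proof.
rewrite -!sum_const_card.
under [RHS]eq_bigr => z zC do rewrite -(row_sum_N zC).
rewrite -(gram_total D C (fun x z => N z x)); apply: eq_bigr => x xD.
by under eq_bigr => y yD do rewrite col_gram_N //; rewrite (sum_by_blocks _ _ _ partD sizeP xD).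
Qed.

Lemma count_closed_walks :
  c * (k%:R ^+ 2 + (c - 1) * mu%:R ^+ 2) =
  V * ((k%:R - K%:R) ^+ 2 + (n%:R - 1) * (mu%:R - l1%:R) ^+ 2
       + (V - n%:R) * (mu%:R - l2%:R) ^+ 2).
Proof.
rewrite -!sum_const_card.
transitivity (\sum_(z in C) \sum_(z' in C) (\sum_(x in D) N z x * N z' x) ^+ 2).
  apply: eq_bigr => z zC; under eq_bigr => z' z'C do rewrite row_gram_N // (fun_if (fun a => a ^+ 2)).
  by rewrite sum_kronecker.
rewrite gram_trace_sqr; apply: eq_bigr => x xD.
under eq_bigr => y yD do rewrite col_gram_N // !(fun_if (fun a => a ^+ 2)).
by rewrite (sum_by_blocks _ _ _ partD sizeP xD).
Qed.

End CocliqueIncidence.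

Lemma coclique_ddg_sizes (R : nzRingType) (T : finType) (e : rel T)
    (v k lam mu : nat) (C : {set T}) (V K l1 l2 m n : nat) :
  srg e v k lam mu -> ddg_on e (~: C) V K l1 l2 m n ->
  [/\ (0 < V)%N, (V%:R : R) = m%:R * n%:R & (v%:R : R) = #|C|%:R + m%:R * n%:R].
Proof.
move=> [_ cardT _ _ _] [cardD _ [x0 [_ [x0D _ _ _]]] _ [P [partD cardP sizeP _ _]]].
have cardV : V = (m * n)%N by rewrite -cardD (card_uniform_partition sizeP partD) cardP.
split; first by rewrite -cardD; apply/card_gt0P; exists x0.
  by rewrite cardV natrM.
by rewrite -natrM -cardV -cardD -natrD cardsC cardT.
Qed.

Lemma coclique_ddg_identities (R : comNzRingType) (T : finType) (e : rel T)
    (v k mu : nat) (C : {set T}) (V K l1 l2 m n : nat) :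
  srg e v k mu mu -> coclique e C -> ddg_on e (~: C) V K l1 l2 m n ->
  let c : R := #|C|%:R in let mn : R := m%:R * n%:R in
  [/\ c * k%:R = mn * (k%:R - K%:R),
      c * (k%:R + (c - 1) * mu%:R) = mn * (k%:R - K%:R) ^+ 2,
      mn * ((k%:R - K%:R) + (n%:R - 1) * (mu%:R - l1%:R) + (mn - n%:R) * (mu%:R - l2%:R))
        = c * k%:R ^+ 2 &
      c * (k%:R ^+ 2 + (c - 1) * mu%:R ^+ 2) =
        mn * ((k%:R - K%:R) ^+ 2 + (n%:R - 1) * (mu%:R - l1%:R) ^+ 2
              + (mn - n%:R) * (mu%:R - l2%:R) ^+ 2)].
Proof.
move=> srgE cocC ddgD c mn; rewrite {}/mn.
have [_ <- _] := coclique_ddg_sizes R srgE ddgD.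
case: ddgD => <- regD _ _ [P [partD _ sizeP sameB diffB]].
split.
- exact: count_edges_C_D srgE cocC regD.
- exact: count_paths_through_D srgE cocC regD.
- exact: count_paths_through_C srgE cocC regD partD sizeP sameB diffB.
- exact: count_closed_walks srgE cocC regD partD sizeP sameB diffB.
Qed.

Lemma eq_from_two_moments (F : fieldType) (x y a b : F) :
  x * a = y * b -> x * a ^+ 2 = y * b ^+ 2 -> y * b != 0 -> a = b.
Proof.
move=> mom1 mom2 yb0.
have /eqP : y * b * (b - a) = 0.
  have xa2 : x * a ^+ 2 = y * b * a by rewrite expr2 mulrA mom1.
  by rewrite mulrBr -xa2 mom2 expr2 mulrA subrr.
by rewrite mulf_eq0 (negbTE yb0) subr_eq0 => /eqP ->.
Qed.

Lemma coclique_size_eq_classes (F : fieldType) (k K mu l1 l2 c m n : F) :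
  c != 0 -> m * n != 0 -> m != 1 -> l1 != l2 -> k != mu -> mu - l1 = k - K ->
  c * k = m * n * (k - K) ->
  c * (k + (c - 1) * mu) = m * n * (k - K) ^+ 2 ->
  m * n * ((k - K) + (n - 1) * (mu - l1) + (m * n - n) * (mu - l2)) = c * k ^+ 2 ->
  c * (k ^+ 2 + (c - 1) * mu ^+ 2) =
    m * n * ((k - K) ^+ 2 + (n - 1) * (mu - l1) ^+ 2 + (m * n - n) * (mu - l2) ^+ 2) ->
  c = m /\ k - mu = n * ((k - K) - (mu - l2)).
Proof.
move=> c0 mn0 m1 l12 kmu l1d edges pathsD pathsC walks.
rewrite l1d in pathsC walks; set d := k - K in l1d edges pathsD pathsC walks *.
have rowC : k + (c - 1) * mu = k * d.
  by apply: (mulfI c0); rewrite pathsD [RHS]mulrA edges; ring.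
have rowD : n * (d + (m - 1) * (mu - l2)) = k * d.
  apply: (mulfI mn0); transitivity (c * k ^+ 2); first by rewrite -pathsC; ring.
  by rewrite expr2 mulrA edges; ring.
(* The weights c - 1 and m - 1 give a and b equal first and second moments. *)
set a := k - mu; set b := n * (d - (mu - l2)).
have mom1 : (c - 1) * a = (m - 1) * b.
  have -> : (c - 1) * a = c * k - (k + (c - 1) * mu) by rewrite /a; ring.
  have -> : (m - 1) * b = m * n * d - n * (d + (m - 1) * (mu - l2)) by rewrite /b; ring.
  by rewrite rowC rowD edges.
have mom2 : (c - 1) * a ^+ 2 = (m - 1) * b ^+ 2.
  apply/eqP; rewrite -subr_eq0; apply/eqP.
  have -> : (c - 1) * a ^+ 2 - (m - 1) * b ^+ 2 =
     (n * (d + (m - 1) * (mu - l2))) ^+ 2 - (k + (c - 1) * mu) ^+ 2 +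
     (c * (k ^+ 2 + (c - 1) * mu ^+ 2) -
      m * n * (d ^+ 2 + (n - 1) * d ^+ 2 + (m * n - n) * (mu - l2) ^+ 2)).
    by rewrite /a /b; ring.
  by rewrite rowC rowD walks !subrr addr0.
have b0 : (m - 1) * b != 0.
  rewrite mulf_neq0 ?subr_eq0 // mulf_neq0 //; first by apply: contraNneq mn0 => ->; rewrite mulr0.
  have -> : d - (mu - l2) = l2 - l1 by rewrite -l1d; ring.
  by rewrite subr_eq0 eq_sym.
have ab := eq_from_two_moments mom1 mom2 b0.
split=> //; apply: (addIr (- 1)); apply: (mulIf (x := a)).
  by rewrite subr_eq0.
by rewrite mom1 ab.
Qed.

Lemma ddg_parameters (F : fieldType) (t k K mu l1 l2 m n : F) :
  t != 0 -> m != 0 -> n != 0 -> n != 1 ->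
  mu = k - t ^+ 2 -> l1 = K - t ^+ 2 ->
  m * (k + t) = (m + m * n) * t ->
  m * k = m * n * (k - K) ->
  m * (k + (m - 1) * mu) = m * n * (k - K) ^+ 2 ->
  k - mu = n * ((k - K) - (mu - l2)) ->
  [/\ m = t * (n - 1) / (n - t), m * n = n * t * (n - 1) / (n - t),
      K = t * (n - 1), l1 = t * (n - t - 1) & l2 = t * (n - 1) * (n - t) / n].
Proof.
move=> t0 m0 n0 n1 hmu hl1 hoffman edges pathsD ab.
have knt : k = n * t.
  apply: (mulfI m0); apply: (addIr (m * t)).
  by rewrite -mulrDr hoffman; ring.
have dt : k - K = t.
  by apply: (mulfI (mulf_neq0 m0 n0)); rewrite -edges knt mulrA.
have hK : K = t * (n - 1).
  by transitivity (k - (k - K)); [ring | rewrite dt knt; ring].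
have rel : m * (n - t) = t * (n - 1).
  have /eqP : m * (t * (m * (n - t) - t * (n - 1))) = 0.
    transitivity (m * (k + (m - 1) * mu) - m * n * (k - K) ^+ 2).
      by rewrite hmu dt knt; ring.
    by rewrite pathsD subrr.
  by rewrite !mulf_eq0 (negbTE m0) (negbTE t0) subr_eq0 => /eqP.
have nt0 : n - t != 0.
  apply: contra n1 => /eqP nt; move: rel; rewrite nt mulr0 => /esym/eqP.
  by rewrite mulf_eq0 (negbTE t0) subr_eq0.
split.
- by rewrite -rel mulfK.
- by apply: (mulIf nt0); rewrite divfK // mulrAC rel; ring.
- exact: hK.
- by rewrite hl1 hK; ring.
apply: (mulIf n0); rewrite divfK //.
transitivity (n * ((k - K) - (mu - l2)) - n * (k - K) + n * mu); first ring.
by rewrite -ab hmu dt knt; ring.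
Qed.

Theorem mainTheorem9 (R : rcfType) (T : finType) (e : rel T)
    (v k lam mu : nat) (r s : R) (C : {set T})
    (V K l1 l2 m n : nat) :
  srg e v k lam mu ->
  primitive e ->
  srg_spectrum e k%:R r s ->
  k%:R > r -> r > s ->
  coclique e C ->
  (#|C|%:R : R) = v%:R * s / (s - k%:R) ->
  proper_ddg_on e (~: C) V K l1 l2 m n ->
  r = Num.sqrt (K%:R - l1%:R) ->
  s = - Num.sqrt (K%:R - l1%:R) ->
  [/\ (m%:R : R) = (- s) * (n%:R - 1) / (n%:R + s),
      (V%:R : R) = n%:R * (- s) * (n%:R - 1) / (n%:R + s),
      (K%:R : R) = (- s) * (n%:R - 1),
      (l1%:R : R) = (- s) * (n%:R + s - 1) &
      (l2%:R : R) = (- s) * (n%:R - 1) * (n%:R + s) / n%:R].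
Proof.
move=> srgE _ spec k_gt_r r_gt_s cocC cardC [ddgD m1 n1 l12] hr hs.
set t := Num.sqrt _ in hr hs; subst r s; rewrite opprK.
have t_gt0 : 0 < t by lra.
have hl1 : (l1%:R : R) = K%:R - t ^+ 2 by rewrite sqr_sqrtr ?subKr // ltW // -sqrtr_gt0.
have [lam_mu hmu] := srg_symmetric_spectrum srgE spec t_gt0 k_gt_r; subst lam.
have [V_gt0 cardV hv] := coclique_ddg_sizes R srgE ddgD.
have [edges pathsD pathsC walks] := coclique_ddg_identities R srgE cocC ddgD.
have hoffman : (#|C|%:R : R) * (k%:R + t) = v%:R * t.
  have tk : - t - k%:R != 0 by rewrite subr_eq0 lt_eqF // (lt_trans r_gt_s).
  by move: cardC => /(congr1 ( *%R^~ (- t - k%:R))); rewrite divfK //; lra.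
have mn0 : (m%:R : R) * n%:R != 0 by rewrite -cardV pnatr_eq0 -lt0n.
have c0 : (#|C|%:R : R) != 0.
  apply: contraNneq mn0 => c0; move: hoffman; rewrite hv c0 mul0r add0r.
  by move=> /esym/eqP; rewrite mulf_eq0 (gt_eqF t_gt0) orbF.
have kmu : (k%:R : R) != mu%:R.
  by rewrite hmu; apply/eqP => h; move: (exprn_gt0 2 t_gt0); lra.
have l1d : (mu%:R - l1%:R : R) = k%:R - K%:R by rewrite hmu hl1; ring.
have [m1' n1' l12'] : [/\ (m%:R : R) != 1, (n%:R : R) != 1 & (l1%:R : R) != l2%:R].
  by rewrite !pnatr_eq1 eqr_nat.
have [cm ab] := coclique_size_eq_classes c0 mn0 m1' l12' kmu l1d edges pathsD pathsC walks.
rewrite cm in hoffman edges pathsD; rewrite hv cm in hoffman.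
move: mn0; rewrite mulf_eq0 negb_or => /andP [m0 n0].
rewrite cardV.
exact: (ddg_parameters (lt0r_neq0 t_gt0) m0 n0 n1' hmu hl1 hoffman edges pathsD ab).
Qed.
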